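(* Let $R$ be a commutative ring and $M$ an $R$-module. The following are equivalent: (1) $M$ is $w$-split. (2) $\mathrm{Ext}^1_R(M,N)$ is GV-torsion for all $R$-modules $N$. (3) $\mathrm{Ext}^i_R(M,N)$ is GV-torsion for all $R$-modules $N$ and all integers $i\ge 1$. (4) For every $R$-epimorphism $g:B\to C$, the induced map $g_*:\mathrm{Hom}_R(M,B)\to\mathrm{Hom}_R(M,C)$ has GV-torsion cokernel. (5) For every $R$-epimorphism $g':F\to M$ with $F$ projective, the induced map $g'_*:\mathrm{Hom}_R(M,F)\to\mathrm{Hom}_R(M,M)$ has GV-torsion cokernel. (6) For every $R$-epimorphism $g:B\to C$ and every homomorphism $\alpha:M\to C$, there exist $J=\langle d_1,\dots,d_n\rangle\in\mathrm{GV}(R)$ and homomorphisms $h_k:M\to B$ with $gh_k=d_k\alpha$ for $k=1,\dots,n$. (7) Every exact sequence $0\to A\to B\to M\to 0$ of $R$-modules is $w$-split. (8) There exist elements $\{x_i\}_{i\in I}$ of $M$ and $J=\langle d_1,\dots,d_n\rangle\in\mathrm{GV}(R)$ with the following property. For each $k=1,\dots,n$ there are homomorphisms $\{f_{k_i}\}_{i\in I}\subseteq M^*=\mathrm{Hom}_R(M,R)$ such that for each $x\in M$, $f_{k_i}(x)=0$ for almost all $i$, and $d_kx=\sum_i f_{k_i}(x)x_i$.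
   Context: $R$ is a commutative ring with identity. For an $R$-module $M$ and $s\in R$, $\eta^M_s:M\to M$ is multiplication by $s$. An ideal $J$ of $R$ is a GV-ideal if $J$ is finitely generated and the natural map $R\to\mathrm{Hom}_R(J,R)$ is an isomorphism; $\mathrm{GV}(R)$ is the set of GV-ideals. $\mathrm{tor_{GV}}(M)=\{x\in M: Jx=0\text{ for some }J\in\mathrm{GV}(R)\}$, and $M$ is GV-torsion if $\mathrm{tor_{GV}}(M)=M$. A short exact sequence $0\to A\xrightarrow{f}B\xrightarrow{g}C\to 0$ is $w$-split if there exist $J=\langle d_1,\dots,d_n\rangle\in\mathrm{GV}(R)$ and $h_1,\dots,h_n\in\mathrm{Hom}_R(C,B)$ with $gh_k=\eta^C_{d_k}$ for all $k$. A module $M$ is $w$-split if there is a $w$-split exact sequence $0\to K\to P\to M\to 0$ with $P$ projective. *)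

From HB Require Import structures.
From mathcomp Require Import all_boot all_order all_algebra.
Set Implicit Arguments. Unset Strict Implicit. Unset Printing Implicit Defensive.
Import GRing.Theory.
Local Open Scope ring_scope.

Definition surjective (A B : Type) (g : A -> B) : Prop :=
  forall y : B, exists x : A, g x = y.

Section GV.
Variable R : comPzRingType.

Definition in_ideal (n : nat) (d : 'I_n -> R) (x : R) : Prop :=
  exists c : 'I_n -> R, x = \sum_(k < n) c k * d k.

(** R-linear maps J -> R, J viewed as an R-submodule of R. *)
Definition ideal_hom (n : nat) (d : 'I_n -> R) (f : R -> R) : Prop :=
  forall (a x y : R), in_ideal d x -> in_ideal d y ->
    f (a * x + y) = a * f x + f y.

(** J = <d_1..d_n> is a GV-ideal: it is finitely generated (by d) and the
    natural map R -> Hom_R(J,R), r |-> (x |-> r x), is bijective. *)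
Definition is_GV (n : nat) (d : 'I_n -> R) : Prop :=
  (forall r : R, (forall x, in_ideal d x -> r * x = 0) -> r = 0) /\
  (forall f : R -> R, ideal_hom d f ->
     exists r : R, forall x, in_ideal d x -> f x = r * x).

Definition GV_torsion_elt (M : lmodType R) (x : M) : Prop :=
  exists (n : nat) (d : 'I_n -> R), is_GV d /\
    forall j, in_ideal d j -> j *: x = 0.

Definition GV_torsion_module (M : lmodType R) : Prop :=
  forall x : M, GV_torsion_elt x.

Definition projective (P : lmodType R) : Prop :=
  forall (B C : lmodType R) (g : {linear B -> C}), surjective g ->
  forall f : {linear P -> C}, exists h : {linear P -> B},
    forall x, g (h x) = f x.

Definition short_exact (A B C : lmodType R)
  (f : {linear A -> B}) (g : {linear B -> C}) : Prop :=
  injective f /\ surjective g /\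
  (forall y : B, g y = 0 <-> exists x : A, f x = y).

Definition w_split_seq (B C : lmodType R) (g : {linear B -> C}) : Prop :=
  exists (n : nat) (d : 'I_n -> R) (h : 'I_n -> {linear C -> B}),
    is_GV d /\ forall k x, g (h k x) = d k *: x.

Definition w_split_module (M : lmodType R) : Prop :=
  exists (K P : lmodType R) (f : {linear K -> P}) (g : {linear P -> M}),
    projective P /\ short_exact f g /\ w_split_seq g.

(** Cokernel of g_* : Hom_R(M,B) -> Hom_R(M,C) is GV-torsion (unfolded:
    every element alpha of Hom_R(M,C) is killed modulo the image of g_*
    by a GV-ideal). *)
Definition coker_postcomp_GV_torsion (M B C : lmodType R)
  (g : {linear B -> C}) : Prop :=
  forall alpha : {linear M -> C},
    exists (n : nat) (d : 'I_n -> R), is_GV d /\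
      forall j, in_ideal d j ->
        exists h : {linear M -> B}, forall x, g (h x) = j *: alpha x.

(** A projective resolution ... -> P 2 -d 1-> P 1 -d 0-> P 0 -e-> M -> 0. *)
Record proj_resolution (M : lmodType R) := ProjResolution {
  pr_mod : nat -> lmodType R;
  pr_d : forall i, {linear pr_mod i.+1 -> pr_mod i};
  pr_e : {linear pr_mod 0 -> M};
  pr_proj : forall i, projective (pr_mod i);
  pr_e_surj : surjective pr_e;
  pr_exact0 : forall y, pr_e y = 0 <-> exists x, pr_d 0 x = y;
  pr_exact : forall i y, pr_d i y = 0 <-> exists x, pr_d i.+1 x = y
}.

(** Ext^(j+1)_R(M,N) is GV-torsion, computed as the cohomology of
    Hom_R(P_*, N) for (any) projective resolution P_* of M: every
    (j+1)-cocycle phi : P_(j+1) -> N (phi o d_(j+1) = 0) is, after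
    multiplication by every element of some GV-ideal, a coboundary
    psi o d_j. *)
Definition Ext_GV_torsion (j : nat) (M N : lmodType R) : Prop :=
  forall P : proj_resolution M,
  forall phi : {linear pr_mod P j.+1 -> N},
    (forall x, phi (pr_d P j.+1 x) = 0) ->
    exists (n : nat) (d : 'I_n -> R), is_GV d /\
      forall r, in_ideal d r ->
        exists psi : {linear pr_mod P j -> N},
          forall x, r *: phi x = psi (pr_d P j x).

End GV.

(* Every condition is equivalent to the existence of a projective Q and a map
   g0 : Q -> M that splits up to a GV-ideal J = <d_1, ..., d_n>, i.e.
   g0 h_k = d_k for some h_k : M -> Q.  Lifting through Q gives the lifting
   property (6), and linear combinations of the h_k factor r id_M through Q
   for every r in J.  Such an r kills Ext^(j+1)(M, -): lifting r id_M along a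
   projective resolution yields s_i : P_i -> P_(i+1) with d_i s_i d_i = r d_i,
   and then r phi = (phi s_j) d_j for every cocycle phi.  Conversely, if the
   class of d_0 : P_1 -> ker e in Ext^1(M, ker e) is killed by r, for a
   projective cover e : F -> M, then r id_F - psi vanishes on ker e = im d_0
   and hence factors as H e with e H = r id_M.  Free modules are the finitely
   supported functions; their coordinate functionals give the dual basis (8),
   and covering kernels by free modules gives projective resolutions. *)

From HB Require Import structures.
From mathcomp Require Import all_boot all_order all_algebra.
From mathcomp Require Import boolp functions.
Set Implicit Arguments. Unset Strict Implicit. Unset Printing Implicit Defensive.
Import GRing.Theory.
Local Open Scope ring_scope.

Lemma big_seq_cover (I : eqType) (V : zmodType) (F : I -> V) (s1 s2 : seq I) :
  uniq s1 -> uniq s2 ->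
  (forall i, F i != 0 -> i \in s1) -> (forall i, F i != 0 -> i \in s2) ->
  \sum_(i <- s1) F i = \sum_(i <- s2) F i.
Proof.
move=> us1 us2 sF1 sF2; apply/perm_big_supp/uniq_perm; rewrite ?filter_uniq //.
move=> i; rewrite !mem_filter.
by case: (F i != 0) / boolP => //= /[dup] /sF1 -> /sF2 ->.
Qed.

Section FreeModule.
Variables (R : pzRingType) (X : eqType).

Definition finsupp (f : X -> R) : Prop :=
  exists s : seq X, forall x, x \notin s -> f x = 0.

Definition finsupp_pred : pred (X -> R^o) := fun f => `[< finsupp f >].

Lemma finsupp_subsemimod_closed : subsemimod_closed finsupp_pred.
Proof.
split; first split.
- by apply/asboolP; exists [::].
- move=> f g /asboolP[s fs] /asboolP[t gt]; apply/asboolP; exists (s ++ t) => x.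
  by rewrite mem_cat negb_or addrfctE => /andP[xs xt]; rewrite fs ?gt ?addr0.
- move=> a f /asboolP[s fs]; apply/asboolP; exists s => x xs.
  by rewrite -[(a *: f) x]/(a *: f x) fs ?scaler0.
Qed.

HB.instance Definition _ :=
  GRing.isSubmodClosed.Build R (X -> R^o) finsupp_pred finsupp_subsemimod_closed.

Record freemod :=
  FreeMod { free_coef :> X -> R^o; _ : free_coef \in finsupp_pred }.

HB.instance Definition _ := [isSub for free_coef].
HB.instance Definition _ := [Choice of freemod by <:].
HB.instance Definition _ := [SubChoice_isSubLmodule of freemod by <:].

Lemma free_finsupp (p : freemod) : finsupp p.
Proof. by case: p => f /= /asboolP. Qed.

Definition free_supp (p : freemod) : seq X := undup (sval (cid (free_finsupp p))).

Lemma free_supp_uniq p : uniq (free_supp p).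
Proof. exact: undup_uniq. Qed.

Lemma notin_free_supp p x : x \notin free_supp p -> p x = 0.
Proof. rewrite /free_supp mem_undup; case: cid => s /= sP; exact: sP. Qed.

Definition free_coord (x : X) (p : freemod) : R^o := p x.

Lemma free_coord_is_linear x : linear (free_coord x).
Proof. by []. Qed.

HB.instance Definition _ x :=
  GRing.isLinear.Build R freemod R^o *:%R (free_coord x) (free_coord_is_linear x).

Section Coordinates.
Variables (V : lmodType R) (phi : X -> {linear V -> R^o}).
Hypothesis phi_finsupp : forall v, finsupp (fun x => phi x v).

Definition free_of_coords (v : V) : freemod := FreeMod (asboolT (phi_finsupp v)).

Lemma free_of_coords_is_linear : linear free_of_coords.
Proof. by move=> a v w; apply: val_inj; apply/funext => x; apply: linearPZ. Qed.

HB.instance Definition _ := GRing.isLinear.Build R V freemod *:%R free_of_coords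
  free_of_coords_is_linear.

End Coordinates.

Lemma finsupp_delta (y : X) : finsupp (fun x => (x == y)%:R).
Proof. by exists [:: y] => x; rewrite inE => /negbTE ->. Qed.

Definition free_delta (y : X) : freemod := FreeMod (asboolT (finsupp_delta y)).

Section Lift.
Variables (V : lmodType R) (v : X -> V).

(* The cast picks the scaling of V rather than that of the R-module R^o. *)
Definition free_lift (p : freemod) : V :=
  \sum_(x <- free_supp p) (p x : R) *: v x.

Lemma free_lift_cover (p : freemod) s :
  uniq s -> (forall x, x \notin s -> p x = 0) ->
  free_lift p = \sum_(x <- s) (p x : R) *: v x.
Proof.
move=> us sP; apply: big_seq_cover; rewrite ?free_supp_uniq // => x.
  by apply: contraR => /notin_free_supp ->; rewrite scale0r.
by apply: contraR => /sP ->; rewrite scale0r.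
Qed.

Lemma free_lift_is_linear : linear free_lift.
Proof.
move=> a p q; pose s := undup (free_supp p ++ free_supp q).
have us : uniq s := undup_uniq _.
have [sp sq] : {subset free_supp p <= s} /\ {subset free_supp q <= s}.
  by split=> x xP; rewrite mem_undup mem_cat xP ?orbT.
have Ps (r : freemod) :
    {subset free_supp r <= s} -> forall x, x \notin s -> r x = 0.
  by move=> sr x xs; apply: notin_free_supp; apply: contra xs; apply: sr.
rewrite (free_lift_cover us (Ps _ sp)) (free_lift_cover us (Ps _ sq)).
rewrite (free_lift_cover us); last first.
  move=> x xs; rewrite -[_ x]/(a * p x + q x).
  by rewrite (Ps p sp) ?(Ps q sq) ?mulr0 ?addr0.
rewrite scaler_sumr -big_split; apply: eq_bigr => x _.
by rewrite /= scalerDl scalerA.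
Qed.

HB.instance Definition _ :=
  GRing.isLinear.Build R freemod V *:%R free_lift free_lift_is_linear.

Lemma free_lift_delta y : free_lift (free_delta y) = v y.
Proof.
rewrite (@free_lift_cover _ [:: y]) // ?big_seq1 /= ?eqxx ?scale1r //.
by move=> x; rewrite inE /= => /negbTE ->.
Qed.

End Lift.

Lemma free_decomp (p : freemod) : p = free_lift free_delta p.
Proof.
apply: val_inj; apply/funext => x.
rewrite -[RHS]/(free_coord x (free_lift free_delta p)) linear_sum.
under eq_bigr => y _ do
  rewrite linearZ /= -[_ *: _]/(p y * (x == y)%:R) mulr_natr.
have [xp|xNp] := boolP (x \in free_supp p); last first.
  rewrite [LHS]notin_free_supp // big1_seq // => y /andP[_ yp].
  by case: (eqVneq x y) => [xy|_]; rewrite ?mulr0n // xy yp in xNp.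
rewrite (bigD1_seq x) ?free_supp_uniq //= eqxx mulr1n big1 ?addr0 // => y.
by rewrite eq_sym => /negbTE ->.
Qed.

Lemma free_lift_unique (V : lmodType R) (f : {linear freemod -> V}) p :
  f p = free_lift (f \o free_delta) p.
Proof.
by rewrite {1}(free_decomp p) linear_sum; apply: eq_bigr => x _; rewrite linearZ.
Qed.

Lemma free_lift_comp (V W : lmodType R) (g : {linear V -> W}) (v : X -> V) p :
  g (free_lift v p) = free_lift (g \o v) p.
Proof.
rewrite -[LHS]/((g \o free_lift v) p) free_lift_unique.
by congr free_lift; apply/funext => x /=; rewrite free_lift_delta.
Qed.

End FreeModule.

Definition free_cover (R : pzRingType) (V : lmodType R) :
  {linear freemod R V -> V} := free_lift idfun.

Lemma free_cover_surj (R : pzRingType) (V : lmodType R) :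
  surjective (free_cover V).
Proof. by move=> x; exists (free_delta R x); rewrite /= free_lift_delta. Qed.

Section Kernel.
Variables (R : comPzRingType) (V W : lmodType R) (g : {linear V -> W}).

Definition kernel_pred : pred V := fun x => g x == 0.

Lemma kernel_subsemimod_closed : subsemimod_closed kernel_pred.
Proof.
split; first split.
- by rewrite unfold_in /kernel_pred linear0.
- move=> x y; rewrite !unfold_in /kernel_pred linearD.
  by move=> /eqP-> /eqP->; rewrite addr0.
- move=> a x; rewrite !unfold_in /kernel_pred linearZZ.
  by move=> /eqP->; rewrite scaler0.
Qed.

HB.instance Definition _ :=
  GRing.isSubmodClosed.Build R V kernel_pred kernel_subsemimod_closed.

Record kernel := Kernel { kernel_val :> V; _ : kernel_val \in kernel_pred }.

HB.instance Definition _ := [isSub for kernel_val].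
HB.instance Definition _ := [Choice of kernel by <:].
HB.instance Definition _ := [SubChoice_isSubLmodule of kernel by <:].

Lemma kernel_short_exact :
  surjective g -> short_exact (val : {linear kernel -> V}) g.
Proof.
move=> gs; split; [exact: val_inj | split=> // y].
split=> [/eqP gy | [x <-]]; first by exists (Sub y gy).
exact/eqP/(valP x).
Qed.

Section Corestriction.
Variables (U : lmodType R) (f : {linear U -> V}) (fg : forall x, g (f x) = 0).

Definition kernel_corestr (x : U) : kernel := Sub (f x) (introT eqP (fg x)).

Lemma kernel_corestr_is_linear : linear kernel_corestr.
Proof. by move=> a x y; apply: val_inj; rewrite /= linearPZ. Qed.

HB.instance Definition _ := GRing.isLinear.Build R U kernel *:%R kernel_corestr
  kernel_corestr_is_linear.

End Corestriction.

Definition ker_cover : {linear freemod R V -> V} :=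
  free_lift (fun x => if g x == 0 then x else 0).

Lemma ker_coverP y : g y = 0 <-> exists p, ker_cover p = y.
Proof.
split=> [gy | [p <-]].
  by exists (free_delta R y); rewrite /= free_lift_delta gy eqxx.
rewrite /= free_lift_comp /free_lift big1 // => x _ /=.
by case: eqP => [->|_]; rewrite ?linear0 ?scaler0.
Qed.

End Kernel.

Lemma linear_factor_surj (R : pzRingType) (F M W : lmodType R)
    (g : {linear F -> M}) (t : {linear F -> W}) :
  surjective g -> (forall y, g y = 0 -> t y = 0) ->
  exists H : {linear M -> W}, forall y, H (g y) = t y.
Proof.
move=> g_surj t_ker; pose H m := t (sval (cid (g_surj m))).
have HE y : H (g y) = t y.
  rewrite /H; case: cid => x /= gx; apply/eqP; rewrite -subr_eq0 -linearB.
  by apply/eqP/t_ker; rewrite linearB gx subrr.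
have H_linear : linear H.
  move=> a m m'; have [[x <-] [x' <-]] := (g_surj m, g_surj m').
  by rewrite -linearPZ !HE linearPZ.
pose Hl : {linear M -> W} := HB.pack H (GRing.isLinear.Build _ _ _ _ H H_linear).
by exists Hl.
Qed.

Section LinearCombination.
Variables (R : comPzRingType) (U V : lmodType R).
Variables (n : nat) (c : 'I_n -> R) (h : 'I_n -> {linear U -> V}).

Definition lincomb (x : U) : V := \sum_k c k *: h k x.

Lemma lincomb_is_linear : linear lincomb.
Proof.
move=> a x y; rewrite /lincomb scaler_sumr -big_split; apply: eq_bigr => k _ /=.
by rewrite linearP scalerDr !scalerA mulrC.
Qed.

HB.instance Definition _ :=
  GRing.isLinear.Build R U V *:%R lincomb lincomb_is_linear.

End LinearCombination.

Lemma in_ideal_gen (R : comPzRingType) n (d : 'I_n -> R) k : in_ideal d (d k).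
Proof.
exists (fun i => (i == k)%:R); rewrite (bigD1 k) //= eqxx mul1r big1 ?addr0 //.
by move=> i /negbTE ->; rewrite mul0r.
Qed.

Lemma in_ideal_lift (R : comPzRingType) (M B C : lmodType R) (g : {linear B -> C})
    (alpha : {linear M -> C}) n (d : 'I_n -> R) (h : 'I_n -> {linear M -> B}) :
  (forall k x, g (h k x) = d k *: alpha x) ->
  forall j, in_ideal d j ->
  exists H : {linear M -> B}, forall x, g (H x) = j *: alpha x.
Proof.
move=> hP j [c ->]; exists (lincomb c h) => x /=.
rewrite linear_sum scaler_suml; apply: eq_bigr => k _.
by rewrite linearZ /= hP scalerA.
Qed.

Section Projective.
Variable R : comPzRingType.

Lemma free_lift_along (X : eqType) (B C : lmodType R) (g : {linear B -> C})
    (v : X -> C) :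
  (forall x, exists b, g b = v x) ->
  exists h : {linear freemod R X -> B}, forall p, g (h p) = free_lift v p.
Proof.
move=> vg; exists (free_lift (fun x => sval (cid (vg x)))) => p.
by rewrite free_lift_comp; congr free_lift; apply/funext => x /=; case: cid.
Qed.

Lemma free_projective (X : eqType) : projective (freemod R X).
Proof.
move=> B C g g_surj f.
have [h hP] := free_lift_along (v := f \o @free_delta R X) (fun x => g_surj _).
by exists h => p; rewrite hP -free_lift_unique.
Qed.

Lemma projective_lift (P B C : lmodType R) (g : {linear B -> C})
    (f : {linear P -> C}) :
  projective P -> (forall x, exists b, g b = f x) ->
  exists h : {linear P -> B}, forall x, g (h x) = f x.
Proof.
move=> P_proj fg; have [s sK] := P_proj _ _ _ (@free_cover_surj R P) idfun.
have [h hP] := free_lift_along fg.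
exists (h \o s) => x; rewrite /= hP.
by rewrite -[free_lift f _]/(free_lift (f \o idfun) _) -free_lift_comp sK.
Qed.

End Projective.

Section FreeResolution.
Variables (R : comPzRingType) (F M : lmodType R) (e : {linear F -> M}).
Hypotheses (F_proj : projective F) (e_surj : surjective e).

(* The source of [resolution_arrow i] is the target of [resolution_arrow i.+1],
   so consecutive differentials compose by conversion. *)
Record lin_arrow := LinArrow {
  arrow_src : lmodType R;
  arrow_tgt : lmodType R;
  arrow_map : {linear arrow_src -> arrow_tgt}
}.

Definition syzygy_arrow (a : lin_arrow) : lin_arrow :=
  LinArrow (ker_cover (arrow_map a)).

Definition resolution_arrow (i : nat) : lin_arrow :=
  iter i syzygy_arrow (LinArrow (ker_cover e)).

Definition resolution_mod (i : nat) : lmodType R :=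
  arrow_tgt (resolution_arrow i).

Definition resolution_d (i : nat) :
  {linear resolution_mod i.+1 -> resolution_mod i} :=
  arrow_map (resolution_arrow i).

Lemma resolution_mod_projective i : projective (resolution_mod i).
Proof. by case: i => [|[|i]] //; apply: free_projective. Qed.

Lemma resolution_exact i y :
  resolution_d i y = 0 <-> exists x, resolution_d i.+1 x = y.
Proof. exact: ker_coverP. Qed.

Definition free_resolution : proj_resolution M :=
  ProjResolution resolution_mod_projective e_surj (ker_coverP e) resolution_exact.

End FreeResolution.

Section ResolutionHomotopy.
Variables (R : comPzRingType) (M : lmodType R) (P : proj_resolution M) (r : R).
Local Notation d := (pr_d P).

Lemma pr_dd i z : d i (d i.+1 z) = 0.
Proof. by apply/pr_exact; exists z. Qed.

Lemma pr_ed z : pr_e P (d 0 z) = 0.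
Proof. by apply/pr_exact0; exists z. Qed.

Definition r_contraction i (s : {linear pr_mod P i -> pr_mod P i.+1}) : Prop :=
  forall z, d i (s (d i z)) = r *: d i z.

Lemma r_contraction_succ i (s : {linear pr_mod P i -> pr_mod P i.+1}) :
  r_contraction s -> exists s' : {linear pr_mod P i.+1 -> pr_mod P i.+2},
    forall x, d i.+1 (s' x) = r *: x - s (d i x).
Proof.
move=> sP; have im_d x : exists y, d i.+1 y = (r \*: idfun \- (s \o d i)) x.
  by apply/pr_exact; rewrite /= linearB linearZZ sP subrr.
exact: projective_lift (@pr_proj _ _ P i.+1) im_d.
Qed.

Lemma r_contraction_all :
  (exists s, @r_contraction 0 s) -> forall i, exists s, @r_contraction i s.
Proof.
move=> s0; elim=> [//|i [s sP]]; have [s' s'P] := r_contraction_succ sP.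
by exists s' => z; rewrite s'P pr_dd linear0 subr0.
Qed.

Lemma r_contraction_Ext (N : lmodType R) j (phi : {linear pr_mod P j.+1 -> N}) :
  (exists s, @r_contraction 0 s) -> (forall x, phi (d j.+1 x) = 0) ->
  exists psi : {linear pr_mod P j -> N}, forall x, r *: phi x = psi (d j x).
Proof.
move=> s0 phi_cocycle; have [s sP] := r_contraction_all s0 j.
have [s' s'P] := r_contraction_succ sP.
exists (phi \o s) => x; apply/eqP; rewrite -subr_eq0 /= -linearZZ -linearB -s'P.
exact/eqP/phi_cocycle.
Qed.

Lemma r_contraction0 (Q : lmodType R) (g0 : {linear Q -> M})
    (H : {linear M -> Q}) :
  projective Q -> (forall x, g0 (H x) = r *: x) -> exists s, @r_contraction 0 s.
Proof.
move=> Q_proj HP; have [u uP] := Q_proj _ _ _ (pr_e_surj P) g0.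
have im_d x : exists y, d 0 y = (r \*: idfun \- (u \o H \o pr_e P)) x.
  by apply/pr_exact0; rewrite /= linearB linearZZ uP HP subrr.
have [s sP] := projective_lift (@pr_proj _ _ P 0) im_d.
by exists s => z; rewrite sP /= pr_ed !raddf0 addr0.
Qed.

End ResolutionHomotopy.

Section Equivalences.
Variables (R : comPzRingType) (M : lmodType R).

Definition w_split_presentation : Prop :=
  exists (Q : lmodType R) (g0 : {linear Q -> M}), projective Q /\ w_split_seq g0.

Definition GV_lifting : Prop :=
  forall (B C : lmodType R) (g : {linear B -> C}), surjective g ->
  forall alpha : {linear M -> C},
  exists (n : nat) (d : 'I_n -> R) (h : 'I_n -> {linear M -> B}),
    is_GV d /\ forall k x, g (h k x) = d k *: alpha x.

Definition GV_dual_basis : Prop :=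
  exists (I : eqType) (xs : I -> M) (n : nat) (d : 'I_n -> R),
    is_GV d /\
    exists fs : 'I_n -> I -> {linear M -> R^o},
      forall (k : 'I_n) (x : M),
        exists s : seq I, uniq s /\
          (forall i, i \notin s -> fs k i x = 0) /\
          d k *: x = \sum_(i <- s) fs k i x *: xs i.

Lemma w_split_module_presentation : w_split_module M -> w_split_presentation.
Proof. by move=> [K [P [f [g [P_proj [_ g_split]]]]]]; exists P, g. Qed.

Lemma w_split_seq_module (F : lmodType R) (e : {linear F -> M}) :
  projective F -> surjective e -> w_split_seq e -> w_split_module M.
Proof.
move=> F_proj e_surj e_split; exists (kernel e), F, val, e.
by split; [|split; [exact: kernel_short_exact|]].
Qed.

Lemma w_split_presentation_lifting : w_split_presentation -> GV_lifting.
Proof.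
move=> [Q [g0 [Q_proj [n [d [h [GVd hP]]]]]]] B C g g_surj alpha.
have [u uP] := Q_proj _ _ g g_surj (alpha \o g0).
exists n, d, (fun k => u \o h k); split=> // k x.
by rewrite /= uP /= hP linearZZ.
Qed.

Lemma w_split_presentation_Ext :
  w_split_presentation -> forall (N : lmodType R) j, Ext_GV_torsion j M N.
Proof.
move=> [Q [g0 [Q_proj [n [d [h [GVd hP]]]]]]] N j P phi phi_cocycle.
exists n, d; split=> // r /(in_ideal_lift (alpha := idfun) hP) [H HP].
exact: r_contraction_Ext (r_contraction0 P Q_proj HP) phi_cocycle.
Qed.

Lemma GV_lifting_coker (B C : lmodType R) (g : {linear B -> C}) :
  GV_lifting -> surjective g -> coker_postcomp_GV_torsion M g.
Proof.
move=> lift g_surj alpha; have [n [d [h [GVd hP]]]] := lift _ _ g g_surj alpha.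
by exists n, d; split=> //; apply: in_ideal_lift hP.
Qed.

Lemma coker_GV_torsion_w_split (B : lmodType R) (g : {linear B -> M}) :
  coker_postcomp_GV_torsion M g -> w_split_seq g.
Proof.
move=> /(_ idfun) [n [d [GVd dP]]].
exists n, d, (fun k => sval (cid (dP _ (in_ideal_gen d k)))); split=> // k x.
by case: cid.
Qed.

Lemma GV_lifting_w_split_seq (B : lmodType R) (g : {linear B -> M}) :
  GV_lifting -> surjective g -> w_split_seq g.
Proof. by move=> lift g_surj; exact: lift _ _ g g_surj idfun. Qed.

Lemma Ext1_w_split_seq (F : lmodType R) (e : {linear F -> M}) :
  projective F -> surjective e -> Ext_GV_torsion 0 M (kernel e) -> w_split_seq e.
Proof.
move=> F_proj e_surj Ext1; pose P := free_resolution F_proj e_surj.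
have d0_ker x : e (pr_d P 0 x) = 0 by exact: pr_ed.
pose phi := kernel_corestr d0_ker.
have phi_cocycle x : phi (pr_d P 1 x) = 0.
  by apply: val_inj; exact: (@pr_dd _ _ P 0 x).
have [n [d [GVd dP]]] := Ext1 P phi phi_cocycle.
suff H k : exists H : {linear M -> F}, forall x, e (H x) = d k *: x.
  by exists n, d, (fun k => sval (cid (H k))); split=> // k x; case: cid.
have [psi psiP] := dP _ (in_ideal_gen d k).
have t_ker y : e y = 0 -> (d k \*: idfun \- (val \o psi)) y = 0.
  move=> /(@pr_exact0 _ _ P) [x <-].
  rewrite -[LHS]/(d k *: pr_d P 0 x - val (psi (pr_d P 0 x))) -psiP.
  by rewrite [val _]linearZZ subrr.
have [H HE] := linear_factor_surj e_surj t_ker.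
exists H => x; have [y <-] := e_surj x.
by rewrite HE /= linearB linearZZ (eqP (valP (psi y))) subr0.
Qed.

Lemma w_split_seq_dual_basis : w_split_seq (free_cover M) -> GV_dual_basis.
Proof.
move=> [n [d [h [GVd hP]]]]; exists M, idfun, n, d; split=> //.
exists (fun k i => free_coord i \o h k) => k x.
exists (free_supp (h k x)); split; first exact: free_supp_uniq.
by split=> [i /notin_free_supp|]; rewrite -?hP.
Qed.

Lemma GV_dual_basis_presentation : GV_dual_basis -> w_split_presentation.
Proof.
move=> [I [xs [n [d [GVd [fs fsP]]]]]].
have fs_finsupp k x : finsupp (fun i => fs k i x).
  by have [s [_ [sP _]]] := fsP k x; exists s.
exists (freemod R I), (free_lift xs); split; first exact: free_projective.
exists n, d, (fun k => free_of_coords (fs_finsupp k)); split=> // k x.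
have [s [s_uniq [sP ->]]] := fsP k x.
by rewrite /= (free_lift_cover _ s_uniq).
Qed.

Lemma free_cover_presentation :
  w_split_seq (free_cover M) -> w_split_presentation.
Proof.
by exists (freemod R M), (free_cover M); split; first exact: free_projective.
Qed.

Lemma w_split_free_cover_module : w_split_seq (free_cover M) -> w_split_module M.
Proof. exact/w_split_seq_module/free_cover_surj/free_projective. Qed.

Lemma Ext1_presentation :
  (forall N, Ext_GV_torsion 0 M N) -> w_split_presentation.
Proof.
move=> Ext1; apply/free_cover_presentation/Ext1_w_split_seq/Ext1.
  exact: free_projective.
exact: free_cover_surj.
Qed.

End Equivalences.

Unset Implicit Arguments.
Theorem proposition2p5 (R : comPzRingType) (M : lmodType R) :
  [<->
   (* (1) *) w_split_module M;
   (* (2) *) (forall N : lmodType R, Ext_GV_torsion 0 M N);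
   (* (3) *) (forall (N : lmodType R) (j : nat), Ext_GV_torsion j M N);
   (* (4) *) (forall (B C : lmodType R) (g : {linear B -> C}),
                surjective g -> coker_postcomp_GV_torsion M g);
   (* (5) *) (forall (F : lmodType R) (g' : {linear F -> M}),
                projective F -> surjective g' ->
                coker_postcomp_GV_torsion M g');
   (* (6) *) (forall (B C : lmodType R) (g : {linear B -> C}),
                surjective g -> forall alpha : {linear M -> C},
                exists (n : nat) (d : 'I_n -> R)
                       (h : 'I_n -> {linear M -> B}),
                  is_GV d /\ forall k x, g (h k x) = d k *: alpha x);
   (* (7) *) (forall (A B : lmodType R) (f : {linear A -> B})
                (g : {linear B -> M}), short_exact f g -> w_split_seq g);
   (* (8) *) (exists (I : eqType) (xs : I -> M) (n : nat) (d : 'I_n -> R),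
                is_GV d /\
                exists fs : 'I_n -> I -> {linear M -> R^o},
                  forall (k : 'I_n) (x : M),
                    exists s : seq I, uniq s /\
                      (forall i, i \notin s -> fs k i x = 0) /\
                      d k *: x = \sum_(i <- s) fs k i x *: xs i)].
Proof.
tfae.
- move=> /w_split_module_presentation /w_split_presentation_Ext Ext N.
  exact: Ext.
- by move/Ext1_presentation; exact: w_split_presentation_Ext.
- move=> Ext B C g g_surj; apply: GV_lifting_coker g_surj.
  by apply/w_split_presentation_lifting/Ext1_presentation => N; exact: Ext.
- by move=> coker F g' _ g'_surj; exact: coker g'_surj.
- move=> coker; apply/w_split_presentation_lifting/free_cover_presentation.
  exact/coker_GV_torsion_w_split/coker/free_cover_surj/free_projective.
- by move=> lift A B f g [_ [g_surj _]]; exact: GV_lifting_w_split_seq.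
- move=> split_ext; apply/w_split_seq_dual_basis/split_ext.
  exact/kernel_short_exact/free_cover_surj.
- move=> /GV_dual_basis_presentation /w_split_presentation_lifting lift.
  by apply/w_split_free_cover_module/GV_lifting_w_split_seq/free_cover_surj.
Qed.
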